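(* Assume the setup of the context with $F$ formally real, and let $B$ be a $\ast$-symmetric basis of $H$. Then for every $\lambda\in\Lambda$: (a) $\chi_\lambda(h)=\chi_\lambda(h^\ast)$ for all $h\in H$; (b) $\nu(\chi_\lambda(x))\ge-a_\lambda$ for all $x\in B$, with equality for at least one $x\in B$.
   Context: Setup: $\Gamma$ totally ordered abelian group; $K$ a field with surjective valuation $\nu:K\to\Gamma\cup\{\infty\}$, valuation ring $\mathcal{O}$, maximal ideal $\mathfrak m$, formally real residue field $F=\mathcal{O}/\mathfrak m$. $H$ a finite-dimensional split semisimple symmetric $K$-algebra with trace form $\tau$; simple modules indexed by $\Lambda$, characters $\chi_\lambda$, Schur elements $c_\lambda$ with $\tau=\sum_\lambda c_\lambda^{-1}\chi_\lambda$; $a_\lambda:=-\tfrac12\nu(c_\lambda)$. $\ast$ is a $K$-linear involutive antiautomorphism of $H$; a $\ast$-symmetric basis is a basis $B$ with $B^\ast=B$ and $\tau(bc^\ast)=\delta_{bc}$. *)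

From HB Require Import structures.
From mathcomp Require Import all_boot all_order all_algebra all_field.
Set Implicit Arguments. Unset Strict Implicit. Unset Printing Implicit Defensive.
Import Order.TTheory GRing.Theory.
Local Open Scope ring_scope.

Definition ordered_abelian_group (G : zmodType) (le : rel G) : Prop :=
  [/\ reflexive le, antisymmetric le, transitive le, total le &
      forall x y z : G, le x y -> le (x + z) (y + z)].

(* Gamma u {oo}, with None = oo *)
Definition ole (G : zmodType) (le : rel G) (x y : option G) : bool :=
  match x, y with
  | _, None => true
  | None, Some _ => false
  | Some a, Some b => le a b
  end.
Definition olt (G : zmodType) (le : rel G) (x y : option G) : bool :=
  ole le x y && (x != y).
Definition oadd (G : zmodType) (x y : option G) : option G :=
  match x, y with Some a, Some b => Some (a + b) | _, _ => None end.
Definition omin (G : zmodType) (le : rel G) (x y : option G) : option G :=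
  if ole le x y then x else y.
Definition odouble (G : zmodType) (x : option G) : option G :=
  omap (fun g => g *+ 2) x.

Definition surj_valuation (K : fieldType) (G : zmodType) (le : rel G)
    (nu : K -> option G) : Prop :=
  [/\ forall x, nu x = None <-> x = 0,
      forall x y, nu (x * y) = oadd (nu x) (nu y),
      forall x y, ole le (omin le (nu x) (nu y)) (nu (x + y)) &
      forall g : option G, exists x, nu x = g].

Definition in_valring (K : fieldType) (G : zmodType) (le : rel G)
  (nu : K -> option G) (x : K) : bool := ole le (Some 0) (nu x).
Definition in_maxideal (K : fieldType) (G : zmodType) (le : rel G)
  (nu : K -> option G) (x : K) : bool := olt le (Some 0) (nu x).

(* The residue field F = O/m is formally real: -1 is not a sum of squares in F,
   i.e. there are no a_1..a_n in O with 1 + sum a_i^2 in m. *)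
Definition residue_formally_real (K : fieldType) (G : zmodType) (le : rel G)
  (nu : K -> option G) : Prop :=
  forall s : seq K, all (in_valring le nu) s ->
    ~~ in_maxideal le nu (1 + \sum_(a <- s) a ^+ 2).

Definition klinear (K : fieldType) (H : falgType K) (f : H -> K) : Prop :=
  forall (a : K) (x y : H), f (a *: x + y) = a * f x + f y.

Definition symmetrizing_form (K : fieldType) (H : falgType K) (tau : H -> K) : Prop :=
  [/\ klinear tau,
      forall x y : H, tau (x * y) = tau (y * x) &
      forall x : H, (forall y : H, tau (x * y) = 0) -> x = 0].

Definition involutive_antiautomorphism (K : fieldType) (H : falgType K)
    (star : H -> H) : Prop :=
  [/\ forall (a : K) (x y : H), star (a *: x + y) = a *: star x + star y,
      forall x y : H, star (x * y) = star y * star x,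
      star 1 = 1 &
      involutive star].

(* ---------- Split semisimple: H ~= prod_lambda M_{d lambda}(K) ----------
   rho lambda : H -> M_{d lambda}(K) is the representation afforded by the
   simple module indexed by lambda. *)
Definition split_semisimple_data (K : fieldType) (H : falgType K) (L : finType)
    (d : L -> nat) (rho : forall l : L, H -> 'M[K]_(d l)) : Prop :=
  (forall l, (0 < d l)%N) /\
  [/\ forall l (a : K) (x y : H), rho l (a *: x + y) = a *: rho l x + rho l y,
      forall l (x y : H), rho l (x * y) = rho l x *m rho l y,
      forall l, rho l 1 = 1%:M,
      forall x y : H, (forall l, rho l x = rho l y) -> x = y &
      forall M : (forall l : L, 'M[K]_(d l)), exists h : H, forall l, rho l h = M l].

Definition character (K : fieldType) (H : falgType K) (L : finType)
    (d : L -> nat) (rho : forall l : L, H -> 'M[K]_(d l)) (l : L) (h : H) : K :=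
  \tr (rho l h).

Definition schur_elements (K : fieldType) (H : falgType K) (L : finType)
    (d : L -> nat) (rho : forall l : L, H -> 'M[K]_(d l)) (tau : H -> K)
    (c : L -> K) : Prop :=
  (forall l, c l != 0) /\
  (forall h : H, tau h = \sum_(l : L) (c l)^-1 * character rho l h).

Definition star_symmetric_basis (K : fieldType) (H : falgType K) (tau : H -> K)
    (star : H -> H) (B : seq H) : Prop :=
  [/\ basis_of fullv B,
      {in B, forall b, star b \in B} &
      {in B &, forall b c, tau (b * star c) = (b == c)%:R}].

From HB Require Import structures.
From mathcomp Require Import all_boot all_order all_algebra all_field.
Set Implicit Arguments. Unset Strict Implicit. Unset Printing Implicit Defensive.
Import GRing.Theory.
Local Open Scope ring_scope.

(* The form (x, y) |-> tau (x * star y) has the identity as Gram matrix in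
   the basis B, so it is a sum of squares.  Formal reality of the residue
   field makes K formally real, hence this form anisotropic.  This forces star
   to fix each central primitive idempotent e_l: star e_l is again a central
   idempotent, and rho_l (star e_l) = 0 would make z_l = c_l e_l isotropic.
   So z_l, which represents chi_l through tau, is star-fixed, which gives (a),
   and evaluating the form at z_l gives sum_(x in B) chi_l(x)^2 = c_l d_l.
   Since nu(d_l) = 0 and the valuation of a sum of squares is twice the least
   valuation of its terms (formal reality of the residue field again), (b)
   follows. *)

Definition sumsq_anisotropic (K : fieldType) : Prop :=
  forall s : seq K, has (fun x => x != 0) s -> \sum_(y <- s) y ^+ 2 != 0.

Section Valuation.
Variables (G : zmodType) (le : rel G) (K : fieldType) (nu : K -> option G).
Hypothesis hG : ordered_abelian_group le.
Hypothesis hnu : surj_valuation le nu.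
Hypothesis hreal : residue_formally_real le nu.

Lemma ole_refl : reflexive (ole le).
Proof. by case: hG => refl _ _ _ _ [a|] //=; apply: refl. Qed.

Lemma ole_trans : transitive (ole le).
Proof. by case: hG => _ _ trans _ _ [b|] [a|] [c|] //=; apply: trans. Qed.

Lemma ole_total : total (ole le).
Proof. by case: hG => _ _ _ tot _ [a|] [b|] //=; apply: tot. Qed.

Lemma le_add2r (c a b : G) : le a b -> le (a + c) (b + c).
Proof. by case: hG => _ _ _ _; apply. Qed.

Lemma ole_double x y : ole le x y -> ole le (odouble x) (odouble y).
Proof.
case: x y => [a|] [b|] //= le_ab; rewrite !mulr2n.
apply: (@ole_trans (Some (b + a)) (Some (a + a)) (Some (b + b))); rewrite /=.
  exact: le_add2r.
by rewrite ![b + _]addrC le_add2r.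
Qed.

Lemma nu_eq0 x : (nu x == None) = (x == 0).
Proof. by case: hnu => nu0 _ _ _; apply/eqP/eqP => /nu0. Qed.

Lemma nu0 : nu 0 = None.
Proof. by apply/eqP; rewrite nu_eq0. Qed.

Lemma nuM x y : nu (x * y) = oadd (nu x) (nu y).
Proof. by case: hnu. Qed.

Lemma nu_neq0 x : x != 0 -> exists g, nu x = Some g.
Proof. by rewrite -nu_eq0; case: (nu x) => // g _; exists g. Qed.

Lemma nu1 : nu 1 = Some 0.
Proof.
have [g nu1g] := nu_neq0 (oner_neq0 K).
have := nuM 1 1; rewrite mulr1 nu1g => -[gg].
by congr Some; apply: (addrI g); rewrite addr0 -gg.
Qed.

Lemma valringD x y :
  in_valring le nu x -> in_valring le nu y -> in_valring le nu (x + y).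
Proof.
rewrite /in_valring => vx vy; case: hnu => _ _ nuD _.
by apply: ole_trans (nuD x y); rewrite /omin; case: ifP.
Qed.

Lemma valringM x y :
  in_valring le nu x -> in_valring le nu y -> in_valring le nu (x * y).
Proof.
rewrite /in_valring nuM; case: (nu x) (nu y) => [a|] [b|] //= le0a le0b.
apply: (@ole_trans (Some b) (Some 0) (Some (a + b))) => //=.
by rewrite -{1}[b]add0r le_add2r.
Qed.

Lemma valring1 : in_valring le nu 1.
Proof. by rewrite /in_valring nu1 ole_refl. Qed.

Lemma nu_1_sumsq (s : seq K) : all (in_valring le nu) s ->
  nu (1 + \sum_(a <- s) a ^+ 2) = Some 0.
Proof.
move=> s_int; have := hreal s_int; rewrite /in_maxideal /olt.
have : in_valring le nu (1 + \sum_(a <- s) a ^+ 2).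
  apply: valringD valring1 _; elim: s s_int => [|a s IHs] /=.
    by rewrite big_nil /in_valring nu0.
  by case/andP=> a_int s_int; rewrite big_cons expr2 valringD ?valringM ?IHs.
by rewrite /in_valring; case: (nu _) => [g|] //= -> /=; rewrite negbK => /eqP <-.
Qed.

Lemma nu_natr n : nu n.+1%:R = Some 0.
Proof.
have -> : n.+1%:R = 1 + \sum_(a <- nseq n (1 : K)) a ^+ 2.
  rewrite -nat1r; congr (_ + _); elim: n => [|n IHn]; first by rewrite big_nil.
  by rewrite /= big_cons -IHn expr1n nat1r.
by apply: nu_1_sumsq; elim: n => //= n ->; rewrite valring1.
Qed.

Lemma ex_min_nu (s : seq K) : s != [::] ->
  exists2 m, m \in s & forall y, y \in s -> ole le (nu m) (nu y).
Proof.
elim: s => // a s IHs _; have [-> | /IHs[m ms min_m]] := eqVneq s [::].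
  by exists a => [|y]; rewrite ?mem_seq1 // => /eqP ->; apply: ole_refl.
have [le_am | le_ma] := orP (ole_total (nu a) (nu m)).
  exists a => [|y]; rewrite ?mem_head // in_cons => /orP[/eqP -> | /min_m].
    exact: ole_refl.
  exact: ole_trans.
by exists m => [|y]; rewrite ?in_cons ?ms ?orbT // => /orP[/eqP -> | /min_m].
Qed.

(* Dividing by a summand [m] of minimal valuation turns the sum of squares into
   [m^2 (1 + sum of squares of integral elements)]. *)
Lemma nu_sumsq (s : seq K) : has (fun x => x != 0) s ->
  exists2 m, m \in s & [/\ forall y, y \in s -> ole le (nu m) (nu y),
    nu (\sum_(y <- s) y ^+ 2) = odouble (nu m) & m != 0].
Proof.
move=> s_nz; have [m ms min_m] : exists2 m, m \in s &
    forall y, y \in s -> ole le (nu m) (nu y) by apply: ex_min_nu; case: s s_nz.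
have m_nz : m != 0.
  apply: contraTneq s_nz => m0; apply/hasPn => y /min_m.
  by rewrite m0 nu0 negbK -nu_eq0; case: (nu y).
have [g nu_m] := nu_neq0 m_nz.
set t := 1 + \sum_(a <- [seq y / m | y <- rem m s]) a ^+ 2.
have sumE : \sum_(y <- s) y ^+ 2 = m ^+ 2 * t.
  rewrite (perm_big _ (perm_to_rem ms)) big_cons /t big_map mulrDr mulr1 mulr_sumr.
  by congr (_ + _); apply: eq_bigr => y _; rewrite expr_div_n mulrC divfK ?expf_neq0.
have nu_t : nu t = Some 0.
  apply: nu_1_sumsq; apply/allP => _ /mapP[y /mem_rem /min_m le_my ->].
  have nu_y : nu y = oadd (nu (y / m)) (Some g) by rewrite -nu_m -nuM divfK.
  move: le_my; rewrite /in_valring nu_y nu_m; case: (nu (y / m)) => [h|] //= le_gh.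
  by have := le_add2r (- g) le_gh; rewrite addrK subrr.
exists m => //; split=> //.
by rewrite sumE nuM nu_t expr2 nuM nu_m /= addr0 mulr2n.
Qed.

Lemma valued_sumsq_anisotropic : sumsq_anisotropic K.
Proof.
move=> s /nu_sumsq[m _ [_ nu_sum m_nz]]; rewrite -nu_eq0 nu_sum.
by have [g ->] := nu_neq0 m_nz.
Qed.

End Valuation.

Section LinearMaps.
Variables (K : fieldType) (U V : lmodType K) (f : U -> V).
Hypothesis f_lin : forall a x y, f (a *: x + y) = a *: f x + f y.

Lemma lin0 : f 0 = 0.
Proof.
by have /esym/eqP := f_lin 1 0 0; rewrite !scale1r addr0 -subr_eq0 addrK => /eqP.
Qed.

Lemma linD x y : f (x + y) = f x + f y.
Proof. by rewrite -[x]scale1r f_lin !scale1r. Qed.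

Lemma linZ a x : f (a *: x) = a *: f x.
Proof. by rewrite -[a *: x]addr0 f_lin lin0 addr0. Qed.

Lemma lin_sum I (r : seq I) (F : I -> U) :
  f (\sum_(i <- r) F i) = \sum_(i <- r) f (F i).
Proof. exact: (big_morph f linD lin0). Qed.

End LinearMaps.

Lemma central_mx_scalar (R : pzRingType) n (P : 'M[R]_n) (i0 : 'I_n) :
  (forall A, P *m A = A *m P) -> P = (P i0 i0)%:M.
Proof.
move=> P_central; apply/matrixP => i j; rewrite mxE.
have mul_delta a b k l : (P *m delta_mx a b) k l = P k a * (l == b)%:R.
  rewrite mxE (bigD1 a) //= big1 => [|m /negbTE ma]; last by rewrite mxE ma mulr0.
  by rewrite mxE eqxx addr0.
have delta_mul a b k l : (delta_mx a b *m P) k l = (k == a)%:R * P b l.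
  rewrite mxE (bigD1 b) //= big1 => [|m /negbTE mb]; last by rewrite mxE mb andbF mul0r.
  by rewrite mxE eqxx andbT addr0.
have [<- | ij] := eqVneq i j.
  have /matrixP/(_ i0 i) := P_central (delta_mx i0 i).
  by rewrite mul_delta delta_mul !eqxx mulr1 mul1r => ->.
have /matrixP/(_ i j) := P_central (delta_mx j j).
by rewrite mul_delta delta_mul eqxx mulr1 (negbTE ij) mul0r => ->.
Qed.

Lemma scalar_mx_inj (R : pzRingType) n (i0 : 'I_n) (a b : R) :
  a%:M = b%:M :> 'M_n -> a = b.
Proof. by move/matrixP/(_ i0 i0); rewrite !mxE eqxx !mulr1n. Qed.

Section SymmetricAlgebra.
Variables (K : fieldType) (H : falgType K) (tau : H -> K) (star : H -> H).
Variables (L : finType) (d : L -> nat) (rho : forall l : L, H -> 'M[K]_(d l)).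
Variables (c : L -> K) (B : seq H).
Hypothesis htau : symmetrizing_form tau.
Hypothesis hrho : split_semisimple_data rho.
Hypothesis hc : schur_elements rho tau c.
Hypothesis hstar : involutive_antiautomorphism star.
Hypothesis hB : star_symmetric_basis tau star B.
Hypothesis hK : sumsq_anisotropic K.

Local Notation chi := (character rho).

Let tau_lin a x y : (tau : H -> K^o) (a *: x + y) = a *: (tau x : K^o) + tau y.
Proof. by case: htau. Qed.
Let tauC x y : tau (x * y) = tau (y * x).
Proof. by case: htau. Qed.
Let d_gt0 l : (0 < d l)%N.
Proof. by case: hrho. Qed.
Let rho_lin l a x y : rho l (a *: x + y) = a *: rho l x + rho l y.
Proof. by case: hrho => _ [+ _ _ _ _]; apply. Qed.
Let rhoM l x y : rho l (x * y) = rho l x *m rho l y.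
Proof. by case: hrho => _ [_ + _ _ _]; apply. Qed.
Let rho_inj x y : (forall l, rho l x = rho l y) -> x = y.
Proof. by case: hrho => _ [_ _ _ + _]; apply. Qed.
Let rho_surj M : exists h, forall l, rho l h = M l.
Proof. by case: hrho => _ [_ _ _ _ +]; apply. Qed.
Let c_neq0 l : c l != 0.
Proof. by case: hc. Qed.
Let tauE h : tau h = \sum_l (c l)^-1 * chi l h.
Proof. by case: hc. Qed.
Let star_lin a x y : star (a *: x + y) = a *: star x + star y.
Proof. by case: hstar. Qed.
Let starM x y : star (x * y) = star y * star x.
Proof. by case: hstar. Qed.
Let starK : involutive star.
Proof. by case: hstar. Qed.

Let scalar_inj l (a b : K) : a%:M = b%:M :> 'M_(d l) -> a = b.
Proof. exact: (@scalar_mx_inj K _ (Ordinal (d_gt0 l))). Qed.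

Lemma rho_onto l (A : 'M[K]_(d l)) : exists h, rho l h = A.
Proof.
have [h rho_h] := rho_surj (fun m => conform_mx (0 : 'M_(d m)) A).
by exists h; rewrite rho_h conform_mx_id.
Qed.

Lemma ex_central_idem l : exists h, [forall m, rho m h == (m == l)%:R%:M].
Proof.
have [h rho_h] := rho_surj (fun m => (m == l)%:R%:M).
by exists h; apply/forallP => m; rewrite rho_h.
Qed.

(* [cidem l] is the central primitive idempotent e_l and [zeta l] is z_l. *)
Definition cidem l := xchoose (ex_central_idem l).

Lemma rho_cidem l m : rho m (cidem l) = (m == l)%:R%:M.
Proof. by have /forallP/(_ m)/eqP := xchooseP (ex_central_idem l). Qed.

Lemma cidemC l y : cidem l * y = y * cidem l.
Proof. by apply: rho_inj => m; rewrite !rhoM rho_cidem scalar_mxC. Qed.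

Lemma cidem_idem l : cidem l * cidem l = cidem l.
Proof.
apply: rho_inj => m; rewrite rhoM rho_cidem -scalar_mxM.
by case: (m == l); rewrite ?mulr1 ?mulr0.
Qed.

Lemma cidem_orth l m : m != l -> cidem m * cidem l = 0.
Proof.
move=> ml; apply: rho_inj => k; rewrite rhoM !rho_cidem (lin0 (rho_lin k)) -scalar_mxM.
by have [-> | _] := eqVneq k m; rewrite ?(negbTE ml) ?mulr0 ?mul0r raddf0.
Qed.

Lemma tau_cidemM l y : tau (cidem l * y) = (c l)^-1 * chi l y.
Proof.
rewrite tauE (bigD1 l) //= big1 => [|m ml];
  rewrite /character rhoM rho_cidem mul_scalar_mx.
  by rewrite eqxx scale1r addr0.
by rewrite (negbTE ml) scale0r mxtrace0 mulr0.
Qed.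

Definition zeta l := c l *: cidem l.

Lemma tau_zetaM l y : tau (zeta l * y) = chi l y.
Proof. by rewrite -scalerAl (linZ tau_lin) tau_cidemM [_ *: _]mulrA divff ?mul1r. Qed.

Lemma rho_zeta l : rho l (zeta l) = (c l)%:M.
Proof. by rewrite (linZ (rho_lin l)) rho_cidem eqxx scale_scalar_mx mulr1. Qed.

Lemma zeta_neq0 l : zeta l != 0.
Proof.
apply: contra_neq (c_neq0 l) => zeta0; apply: (@scalar_inj l).
by rewrite -rho_zeta zeta0 (lin0 (rho_lin l)) raddf0.
Qed.

Let X := in_tuple B.

Let basisB : basis_of fullv X.
Proof. by case: hB. Qed.

Let tau_starB : {in B &, forall b b', tau (b * star b') = (b == b')%:R}.
Proof. by case: hB. Qed.

Lemma coord_expand x : x = \sum_i coord X i x *: B`_i.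
Proof. exact: coord_basis basisB (memvf x). Qed.

Lemma coord_tau x j : coord X j x = tau (x * star B`_j).
Proof.
have uniqB : uniq B by case/andP: basisB => _ /free_uniq.
rewrite {2}(coord_expand x) mulr_suml (lin_sum tau_lin) (bigD1 j) //= big1 => [|i ij].
  by rewrite -scalerAl (linZ tau_lin) tau_starB ?mem_nth // eqxx [_ *: _]mulr1 addr0.
rewrite -scalerAl (linZ tau_lin) tau_starB ?mem_nth // nth_uniq //.
by rewrite (inj_eq val_inj) (negbTE ij) [_ *: _]mulr0.
Qed.

Lemma tau_star_coord x y : tau (x * star y) = \sum_i coord X i x * coord X i y.
Proof.
rewrite {1}(coord_expand y) (lin_sum star_lin) mulr_sumr (lin_sum tau_lin).
apply: eq_bigr => i _.
by rewrite (linZ star_lin) -scalerAr (linZ tau_lin) -coord_tau [_ *: _]mulrC.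
Qed.

Lemma tau_star_sym x y : tau (x * star y) = tau (y * star x).
Proof. by rewrite !tau_star_coord; apply: eq_bigr => i _; rewrite mulrC. Qed.

Lemma tau_star_anisotropic x : x != 0 -> tau (x * star x) != 0.
Proof.
move=> x_nz; rewrite tau_star_coord.
under eq_bigr do rewrite -expr2.
rewrite -big_enum -(big_map (coord X ^~ x) xpredT (fun a => a ^+ 2)); apply: hK.
apply: contra_neqT x_nz => /hasPn coord0; rewrite [x]coord_expand big1 // => i _.
by rewrite (eqP (negPn (coord0 _ (map_f _ (mem_enum _ i))))) scale0r.
Qed.

Lemma star_central x : (forall y, x * y = y * x) -> forall y, star x * y = y * star x.
Proof. by move=> x_central y; rewrite -[y]starK -!starM x_central. Qed.

Lemma rho_central_idem m f : (forall y, f * y = y * f) -> f * f = f ->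
  rho m f = 0 \/ rho m f = 1%:M.
Proof.
move=> f_central f_idem; set i0 := Ordinal (d_gt0 m).
have rho_f_central A : rho m f *m A = A *m rho m f.
  by have [y <-] := rho_onto A; rewrite -!rhoM f_central.
move: (central_mx_scalar i0 rho_f_central); set a := rho m f i0 i0 => rho_f.
have a_idem : a * a = a.
  by apply: (@scalar_inj m); rewrite scalar_mxM -rho_f -rhoM f_idem.
have : a * (a - 1) == 0 by rewrite mulrBr mulr1 a_idem subrr.
rewrite rho_f mulf_eq0 subr_eq0 => /orP[] /eqP ->; [left | right] => //.
exact: raddf0.
Qed.

Lemma rho_star_cidem l : rho l (star (cidem l)) = 1%:M.
Proof.
have star_idem : star (cidem l) * star (cidem l) = star (cidem l).
  by rewrite -starM cidem_idem.
have [rho0 | //] := rho_central_idem l (star_central (@cidemC l)) star_idem.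
have := tau_star_anisotropic (zeta_neq0 l).
rewrite tau_zetaM (linZ star_lin) /character (linZ (rho_lin l)) rho0.
by rewrite scaler0 mxtrace0 eqxx.
Qed.

Lemma star_cidem l : star (cidem l) = cidem l.
Proof.
apply: rho_inj => m; rewrite rho_cidem; have [-> | ml] := eqVneq m l.
  exact: rho_star_cidem.
rewrite -[rho m _]mulmx1 -(rho_star_cidem m) -rhoM -starM cidem_orth //.
by rewrite (lin0 star_lin) (lin0 (rho_lin m)) raddf0.
Qed.

Lemma star_zeta l : star (zeta l) = zeta l.
Proof. by rewrite /zeta (linZ star_lin) star_cidem. Qed.

Lemma chi_star l h : chi l (star h) = chi l h.
Proof. by rewrite -tau_zetaM tau_star_sym star_zeta tauC tau_zetaM. Qed.

Lemma sumsq_chi l : \sum_(x <- B) chi l x ^+ 2 = c l * (d l)%:R.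
Proof.
have -> : c l * (d l)%:R = tau (zeta l * star (zeta l)).
  by rewrite star_zeta tau_zetaM /character rho_zeta mxtrace_scalar mulr_natr.
rewrite tau_star_coord (big_nth 0) big_mkord; apply: eq_bigr => i _.
by rewrite coord_tau tau_zetaM chi_star expr2.
Qed.

End SymmetricAlgebra.

Theorem mainTheorem6
  (G : zmodType) (le : rel G) (K : fieldType) (nu : K -> option G)
  (H : falgType K) (tau : H -> K) (star : H -> H)
  (L : finType) (d : L -> nat) (rho : forall l : L, H -> 'M[K]_(d l))
  (c : L -> K) (B : seq H) :
  ordered_abelian_group le ->
  surj_valuation le nu ->
  residue_formally_real le nu ->
  symmetrizing_form tau ->
  split_semisimple_data rho ->
  schur_elements rho tau c ->
  involutive_antiautomorphism star ->
  star_symmetric_basis tau star B ->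
  forall l : L,
    (forall h : H, character rho l h = character rho l (star h)) /\
    ({in B, forall x, ole le (nu (c l)) (odouble (nu (character rho l x)))} /\
     exists2 x, x \in B & odouble (nu (character rho l x)) = nu (c l)).
Proof.
move=> hG hnu hreal htau hrho hc hstar hB l.
have hK := valued_sumsq_anisotropic hG hnu hreal.
split=> [h | ]; first by rewrite (chi_star htau hrho hc hstar hB hK).
have d_gt0 : (0 < d l)%N by case: hrho.
have nu_d : nu (d l)%:R = Some 0 by rewrite -(prednK d_gt0) (nu_natr hG hnu hreal).
have cd_neq0 : c l * (d l)%:R != 0.
  by apply: mulf_neq0; [case: hc | rewrite -(nu_eq0 hnu) nu_d].
have sumsq := sumsq_chi htau hrho hc hstar hB hK l.
have chi_nz : has (fun x => x != 0) [seq character rho l x | x <- B].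
  apply: contraNT cd_neq0 => /hasPn chi0; rewrite -sumsq big1_seq // => x xB.
  by rewrite (eqP (negPn (chi0 _ (map_f _ xB)))) expr0n.
have [_ /mapP[x xB ->] [min_x nu_sum _]] := nu_sumsq hG hnu hreal chi_nz.
rewrite big_map sumsq (nuM hnu) nu_d in nu_sum.
have nu_c : nu (c l) = odouble (nu (character rho l x)).
  by rewrite -nu_sum; case: (nu (c l)) => //= g; rewrite addr0.
rewrite nu_c; split=> [y yB | ]; last by exists x.
exact/(ole_double hG)/min_x/map_f.
Qed.
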